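(* Let $\mathfrak g=\mathfrak g(\mathfrak l,V,\mathfrak z,\beta)$ be admissible. Then (a) every abelian ideal of $\mathfrak g$ is central, and (b) every ideal of $\mathfrak g$ contained in $V$ is trivial.
   Context: $\mathfrak g$ (finite-dimensional real) is admissible if it contains a pointed (no affine lines), generating (spanning), closed convex subset invariant under $\operatorname{Inn}(\mathfrak g)=\langle e^{\operatorname{ad}\mathfrak g}\rangle$. $\mathfrak g(\mathfrak l,V,\mathfrak z,\beta)$ denotes $\mathfrak z\oplus V\oplus\mathfrak l$ ($\mathfrak l$ reductive, $V$ an $\mathfrak l$-module, $\beta:V\times V\to\mathfrak z$ skew-symmetric and $\mathfrak l$-invariant) with bracket $[(z,v,x),(z',v',x')]=(\beta(v,v'),x.v'-x'.v,[x,x'])$; for an admissible Lie algebra in this form, $\mathfrak z=\mathfrak z(\mathfrak g)$ is the center. *)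

From HB Require Import structures.
From mathcomp Require Import all_boot all_order all_algebra.
From mathcomp Require Import all_classical all_reals all_analysis.
Set Implicit Arguments. Unset Strict Implicit. Unset Printing Implicit Defensive.
Import Order.TTheory GRing.Theory Num.Theory.
Import numFieldTopology.Exports numFieldNormedType.Exports.
Local Open Scope classical_set_scope.
Local Open Scope ring_scope.

Section LieDefs.
Variable R : realType.

Definition bilinear_map (U V W : lmodType R) (b : U -> V -> W) : Prop :=
  (forall (a : R) (x y : U) (v : V), b (a *: x + y) v = a *: b x v + b y v) /\
  (forall (a : R) (x : U) (v w : V), b x (a *: v + w) = a *: b x v + b x w).

Definition lie_bracket (L : lmodType R) (br : L -> L -> L) : Prop :=
  [/\ bilinear_map br,
      (forall x, br x x = 0) &
      (forall x y z, br x (br y z) + br y (br z x) + br z (br x y) = 0)].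

Definition subspace (L : lmodType R) (I : set L) : Prop :=
  I 0 /\ (forall (a : R) u v, I u -> I v -> I (a *: u + v)).

Definition lie_ideal (L : lmodType R) (br : L -> L -> L) (I : set L) : Prop :=
  subspace I /\ (forall x u, I u -> I (br x u)).

Definition abelian_ideal (L : lmodType R) (br : L -> L -> L) (I : set L) : Prop :=
  lie_ideal br I /\ (forall u v, I u -> I v -> br u v = 0).

Definition lie_center (L : lmodType R) (br : L -> L -> L) : set L :=
  [set u | forall x, br x u = 0].

Definition central_set (L : lmodType R) (br : L -> L -> L) (I : set L) : Prop :=
  I `<=` lie_center br.

(** Reductive: the adjoint representation is semisimple, i.e. every ideal
    has a complementary ideal. *)
Definition reductive (L : lmodType R) (br : L -> L -> L) : Prop :=
  lie_bracket br /\
  forall I, lie_ideal br I ->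
    exists J, lie_ideal br J /\
      (forall x, exists u v, I u /\ J v /\ x = u + v) /\
      (forall x, I x -> J x -> x = 0).

Definition in_span (L : lmodType R) (C : set L) (w : L) : Prop :=
  exists (n : nat) (c : 'I_n -> R) (u : 'I_n -> L),
    (forall i, C (u i)) /\ w = \sum_(i < n) c i *: u i.

Definition convex_set (L : lmodType R) (C : set L) : Prop :=
  forall u v (t : R), C u -> C v -> 0 <= t -> t <= 1 -> C (t *: u + (1 - t) *: v).

Definition pointed_set (L : lmodType R) (C : set L) : Prop :=
  ~ exists (a d : L), d != 0 /\ forall t : R, C (a + t *: d).

Definition generating_set (L : lmodType R) (C : set L) : Prop :=
  forall w, in_span C w.

Definition expmap (n : nat) (f : 'rV[R]_n -> 'rV[R]_n) (w : 'rV[R]_n) : 'rV[R]_n :=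
  lim ((fun N : nat => \sum_(j < N) (j`!%:R)^-1 *: iter j f w) @ \oo).

(** Admissibility of the Lie algebra ('rV[R]_n, br): there is a pointed,
    generating, closed convex subset invariant under Inn = <e^{ad g}>;
    invariance under the group is invariance under its generators e^{ad x}. *)
Definition admissible (n : nat) (br : 'rV[R]_n -> 'rV[R]_n -> 'rV[R]_n) : Prop :=
  exists C : set 'rV[R]_n,
    [/\ pointed_set C, generating_set C, closed C, convex_set C &
        forall x w, C w -> C (expmap (br x) w)].

(** The Lie algebra g(l,V,z,beta) = z (+) V (+) l realized on 'rV_(p + m + k):
    an element is row_mx (row_mx z v) x. *)
Definition gz (p m k : nat) (w : 'rV[R]_(p + m + k)) : 'rV[R]_p := lsubmx (lsubmx w).
Definition gV (p m k : nat) (w : 'rV[R]_(p + m + k)) : 'rV[R]_m := rsubmx (lsubmx w).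
Definition gl (p m k : nat) (w : 'rV[R]_(p + m + k)) : 'rV[R]_k := rsubmx w.
Definition gmk (p m k : nat) (z : 'rV[R]_p) (v : 'rV[R]_m) (x : 'rV[R]_k)
  : 'rV[R]_(p + m + k) := row_mx (row_mx z v) x.

Definition gbracket (p m k : nat)
  (brl : 'rV[R]_k -> 'rV[R]_k -> 'rV[R]_k)
  (act : 'rV[R]_k -> 'rV[R]_m -> 'rV[R]_m)
  (beta : 'rV[R]_m -> 'rV[R]_m -> 'rV[R]_p)
  (w w' : 'rV[R]_(p + m + k)) : 'rV[R]_(p + m + k) :=
  gmk (beta (gV w) (gV w'))
      (act (gl w) (gV w') - act (gl w') (gV w))
      (brl (gl w) (gl w')).

Definition lie_module (k m : nat) (brl : 'rV[R]_k -> 'rV[R]_k -> 'rV[R]_k)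
  (act : 'rV[R]_k -> 'rV[R]_m -> 'rV[R]_m) : Prop :=
  bilinear_map act /\
  forall x y v, act (brl x y) v = act x (act y v) - act y (act x v).

Definition invariant_skew_form (k m p : nat)
  (act : 'rV[R]_k -> 'rV[R]_m -> 'rV[R]_m)
  (beta : 'rV[R]_m -> 'rV[R]_m -> 'rV[R]_p) : Prop :=
  [/\ bilinear_map beta,
      (forall v v', beta v v' = - beta v' v) &
      (forall x v v', beta (act x v) v' + beta v (act x v') = 0)].

End LieDefs.

From HB Require Import structures.
From mathcomp Require Import all_boot all_order all_algebra.
From mathcomp Require Import all_classical all_reals all_analysis.
Set Implicit Arguments. Unset Strict Implicit. Unset Printing Implicit Defensive.
Import Order.TTheory GRing.Theory Num.Theory.
Import numFieldTopology.Exports numFieldNormedType.Exports.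
Local Open Scope classical_set_scope.
Local Open Scope ring_scope.

(* If [w] lies in an abelian ideal [I], then [ad w] maps everything into [I]
   and [I] into [0], so [(ad w)^2 = 0] and [e^(t ad w) c = c + t [w, c]].
   For [c] in the invariant convex set [C] this whole line lies in [C], so pointedness
   forces [[w, c] = 0]; as [C] spans, [w] is central.  An ideal contained in [V]
   is abelian, because brackets of elements of [V] lie in [z]; hence it is
   central, and the centre meets [V] only in [0]. *)

Lemma expmap_nil2 (R : realType) n (f : 'rV[R]_n -> 'rV[R]_n) w :
  f 0 = 0 -> f (f w) = 0 -> expmap f w = w + f w.
Proof.
move=> f0 ffw; rewrite /expmap; apply: lim_near_cst; first exact: norm_hausdorff.
exists 2%N => // N /= leN.
have iter_f0 j : iter j f 0 = 0 by elim: j => //= j ->.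
case: N leN => [|[|N]] // _.
rewrite big_ord_recl big_ord_recl /= big1 ?addr0; first by rewrite invr1 !scale1r.
by move=> i _; rewrite add0n -!iterS !iterSr ffw iter_f0 scaler0.
Qed.

Section BilinearMap.
Variables (R : realType) (U V W : lmodType R) (b : U -> V -> W).
Hypothesis b_bilin : bilinear_map b.

Lemma bilinearDl x y v : b (x + y) v = b x v + b y v.
Proof. by rewrite -[x in LHS]scale1r b_bilin.1 scale1r. Qed.

Lemma bilinearDr x v w : b x (v + w) = b x v + b x w.
Proof. by rewrite -[v in LHS]scale1r b_bilin.2 scale1r. Qed.

Lemma bilinear0l v : b 0 v = 0.
Proof. by have := b_bilin.1 (-1) 0 0 v; rewrite scaler0 addr0 scaleN1r addNr. Qed.

End BilinearMap.

Lemma alternating_skew (R : realType) (U W : lmodType R) (b : U -> U -> W) :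
  bilinear_map b -> (forall x, b x x = 0) -> forall x y, b x y = - b y x.
Proof.
move=> b_bilin b_alt x y; apply/eqP; rewrite -addr_eq0; apply/eqP.
have := b_alt (x + y).
by rewrite (bilinearDl b_bilin) !(bilinearDr b_bilin) !b_alt add0r addr0.
Qed.

Section AbelianIdealCentral.
Variables (R : realType) (n : nat) (br : 'rV[R]_n -> 'rV[R]_n -> 'rV[R]_n).
Hypothesis brP : forall w (a : R) u v, br w (a *: u + v) = a *: br w u + br w v.
Hypothesis brC : forall u v, br u v = - br v u.

Lemma bracket0r w : br w 0 = 0.
Proof. by have := brP w (-1) 0 0; rewrite scaler0 addr0 scaleN1r addNr. Qed.

Lemma bracketZr w (a : R) u : br w (a *: u) = a *: br w u.
Proof. by rewrite -[a *: u]addr0 brP bracket0r addr0. Qed.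

Lemma bracketZl (a : R) u v : br (a *: u) v = a *: br u v.
Proof. by rewrite brC bracketZr -scalerN -brC. Qed.

Lemma bracketDr w u v : br w (u + v) = br w u + br w v.
Proof. by rewrite -[u in LHS]scale1r brP scale1r. Qed.

Lemma bracket_span0 w (C : set 'rV[R]_n) :
  generating_set C -> (forall c, C c -> br w c = 0) -> forall x, br w x = 0.
Proof.
move=> C_gen brC0 x; have [N [c [u [Cu ->]]]] := C_gen x.
apply: (big_ind (fun y => br w y = 0)); first exact: bracket0r.
  by move=> y z wy0 wz0; rewrite bracketDr wy0 wz0 addr0.
by move=> i _; rewrite bracketZr brC0 ?scaler0.
Qed.

Lemma abelian_ideal_ad_nil2 I w c :
  abelian_ideal br I -> I w -> br w (br w c) = 0.
Proof.
move=> [[[I0 I_sub] I_ideal] I_ab] Iw; apply: I_ab => //.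
by rewrite brC -scaleN1r -[_ *: _]addr0; apply: I_sub => //; apply: I_ideal.
Qed.

Lemma admissible_abelian_ideal_central :
  admissible br -> forall I, abelian_ideal br I -> central_set br I.
Proof.
move=> [C [C_pointed C_gen _ _ C_inv]] I I_ab w Iw.
have brC0 c : C c -> br w c = 0.
  move=> Cc; apply: contrapT => brwc_neq0; apply: C_pointed.
  exists c, (br w c); split; first exact/eqP.
  move=> t; have := C_inv (t *: w) c Cc.
  rewrite expmap_nil2 ?bracket0r ?bracketZl //.
  by rewrite bracketZr (abelian_ideal_ad_nil2 _ I_ab Iw) !scaler0.
by move=> x /=; rewrite brC (bracket_span0 (C := C)) ?oppr0.
Qed.

End AbelianIdealCentral.

Section SemidirectBracket.
Variables (R : realType) (p m k : nat)
  (brl : 'rV[R]_k -> 'rV[R]_k -> 'rV[R]_k)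
  (act : 'rV[R]_k -> 'rV[R]_m -> 'rV[R]_m)
  (beta : 'rV[R]_m -> 'rV[R]_m -> 'rV[R]_p).
Local Notation g := (gbracket brl act beta).

Lemma gmkE (w : 'rV[R]_(p + m + k)) : gmk (gz w) (gV w) (gl w) = w.
Proof. by rewrite /gmk !hsubmxK. Qed.

Lemma gmk0 : gmk 0 0 0 = 0 :> 'rV[R]_(p + m + k).
Proof. by rewrite /gmk !row_mx0. Qed.

Lemma gz_gmk z v x : gz (gmk z v x : 'rV[R]_(p + m + k)) = z.
Proof. by rewrite /gz /gmk !row_mxKl. Qed.

Lemma gmkP (a : R) z v x z' v' x' :
  a *: gmk z v x + gmk z' v' x'
  = gmk (a *: z + z') (a *: v + v') (a *: x + x') :> 'rV[R]_(p + m + k).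
Proof. by rewrite /gmk !scale_row_mx !add_row_mx. Qed.

Lemma gmkN z v x : - gmk z v x = gmk (- z) (- v) (- x) :> 'rV[R]_(p + m + k).
Proof. by rewrite /gmk !opp_row_mx. Qed.

Hypotheses (brl_lie : lie_bracket brl) (act_mod : lie_module brl act)
  (beta_form : invariant_skew_form act beta).

Lemma gbracketC u v : g u v = - g v u.
Proof.
case: brl_lie => brl_bilin brl_alt _; case: beta_form => _ betaC _.
by rewrite /gbracket gmkN -betaC -(alternating_skew brl_bilin brl_alt) opprB.
Qed.

Lemma gbracketP w (a : R) u v : g w (a *: u + v) = a *: g w u + g w v.
Proof.
case: brl_lie => [[_ brlP] _ _]; case: act_mod => [[actPl actPr] _].
case: beta_form => [[_ betaP] _ _].
have gVP : gV (a *: u + v) = a *: gV u + gV v by rewrite /gV !linearP.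
have glP : gl (a *: u + v) = a *: gl u + gl v by rewrite /gl !linearP.
rewrite /gbracket gmkP gVP glP betaP actPr actPl brlP; congr gmk.
by rewrite scalerBr opprD addrACA.
Qed.

Lemma lie_ideal_inV_abelian I :
  lie_ideal g I -> (forall w, I w -> gz w = 0 /\ gl w = 0) -> abelian_ideal g I.
Proof.
move=> I_ideal I_inV; split=> // u v Iu Iv.
have [_ lu] := I_inV u Iu; have [_ lv] := I_inV v Iv.
have [zuv _] := I_inV _ (I_ideal.2 u v Iv).
have act0 := bilinear0l act_mod.1; case: brl_lie => _ brl_alt _.
move: zuv; rewrite /gbracket gz_gmk => ->.
by rewrite lu lv !act0 subrr brl_alt gmk0.
Qed.

End SemidirectBracket.

Theorem lemma2 (R : realType) (p m k : nat)
  (brl : 'rV[R]_k -> 'rV[R]_k -> 'rV[R]_k)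
  (act : 'rV[R]_k -> 'rV[R]_m -> 'rV[R]_m)
  (beta : 'rV[R]_m -> 'rV[R]_m -> 'rV[R]_p) :
  reductive brl ->
  lie_module brl act ->
  invariant_skew_form act beta ->
  admissible (gbracket brl act beta) ->
  (* z = z(g): the center of g is exactly the z-component *)
  (forall w : 'rV[R]_(p + m + k),
      lie_center (gbracket brl act beta) w <-> (gV w = 0 /\ gl w = 0)) ->
  (forall I : set 'rV[R]_(p + m + k),
      abelian_ideal (gbracket brl act beta) I ->
      central_set (gbracket brl act beta) I) /\
  (forall I : set 'rV[R]_(p + m + k),
      lie_ideal (gbracket brl act beta) I ->
      (forall w, I w -> gz w = 0 /\ gl w = 0) ->
      I = [set 0]).
Proof.
move=> [brl_lie _] act_mod beta_form g_adm centerE.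
have ab_central := admissible_abelian_ideal_central
  (gbracketP brl_lie act_mod beta_form) (gbracketC brl_lie beta_form) g_adm.
split=> // I I_ideal I_inV.
have I_central := ab_central I (lie_ideal_inV_abelian brl_lie act_mod I_ideal I_inV).
apply/seteqP; split=> [w Iw | w ->]; last by case: I_ideal => [[]].
have [zw _] := I_inV w Iw; have /centerE [vw lw] := I_central w Iw.
by rewrite /= -(gmkE w) zw vw lw gmk0.
Qed.
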